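(* Let $N\ge 1$ and $1\le K\le N$ be integers. A behavior $P\in\mathcal{L}_N$ is a vertex of the polytope $\mathcal{C}_{N,K}$ if and only if there is a $K$-junta $f:\{0,1\}^N\to\{0,1\}$ such that $P(a|\mathbf{x})=\delta_{a,f(\mathbf{x})}$ for all $a\in\{0,1\}$ and $\mathbf{x}\in\{0,1\}^N$. In particular, the vertices of $\mathcal{C}_{N,K}$ are in one-to-one correspondence with the $K$-juntas on $N$ variables, and their number is $$|V(\mathcal{C}_{N,K})|=\sum_{k=0}^K\binom{N}{k}\sum_{r=0}^k(-1)^{k-r}\binom{k}{r}2^{2^r}.$$
   Context: A behavior on $N$ input bits is a family $P=(P(a|\mathbf{x}))_{a\in\{0,1\},\mathbf{x}\in\{0,1\}^N}$ of real numbers with $P(a|\mathbf{x})\ge 0$ and $P(0|\mathbf{x})+P(1|\mathbf{x})=1$ for every $\mathbf{x}$; the set of all behaviors is $\mathcal{L}_N\subset\mathbb{R}^{2^{N+1}}$. $\mathcal{C}_{N,K}$ is the set of behaviors $P\in\mathcal{L}_N$ for which there exist non-negative weights $q_{j_1\cdots j_K}$ summing to one, indexed by $K$-tuples of pairwise distinct indices $j_1,\dots,j_K\in\{1,\dots,N\}$, and conditional probability distributions $P(a|x_{j_1}\cdots x_{j_K})$ on $a\in\{0,1\}$ depending only on the bits $x_{j_1},\dots,x_{j_K}$, such that $P(a|\mathbf{x})=\sum_{j_1,\dots,j_K}q_{j_1\cdots j_K}P(a|x_{j_1}\cdots x_{j_K})$ for all $a,\mathbf{x}$. It is a convex polytope.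 A Boolean function $f:\{0,1\}^N\to\{0,1\}$ is a $K$-junta if there is a subset $\{j_1,\dots,j_{N-K}\}\subseteq\{1,\dots,N\}$ of $N-K$ indices such that $f$ does not depend on $x_{j_k}$ for $k=1,\dots,N-K$ (i.e. $f$ depends on at most $K$ of its variables). *)

From HB Require Import structures.
From mathcomp Require Import all_boot all_order all_algebra.
From mathcomp Require Import reals.
Set Implicit Arguments. Unset Strict Implicit. Unset Printing Implicit Defensive.
Import Order.TTheory GRing.Theory Num.Theory.
Local Open Scope ring_scope.

Notation input N := {ffun 'I_N -> bool}.

Definition behavior (R : realType) (N : nat) := bool -> input N -> R.

Definition inL (R : realType) (N : nat) (P : behavior R N) : Prop :=
  (forall a x, 0 <= P a x) /\ (forall x, P false x + P true x = 1).

Definition restr (N K : nat) (j : {ffun 'I_K -> 'I_N}) (x : input N)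
  : {ffun 'I_K -> bool} := [ffun k => x (j k)].

Definition distinctIdx (N K : nat) (j : {ffun 'I_K -> 'I_N}) : bool :=
  injectiveb (fun k : 'I_K => j k).

Definition inC (R : realType) (N K : nat) (P : behavior R N) : Prop :=
  inL P /\
  exists (q : {ffun 'I_K -> 'I_N} -> R)
         (g : {ffun 'I_K -> 'I_N} -> bool -> {ffun 'I_K -> bool} -> R),
    (forall j, distinctIdx j ->
        0 <= q j /\ (forall a y, 0 <= g j a y) /\
        (forall y, g j false y + g j true y = 1)) /\
    \sum_(j | distinctIdx j) q j = 1 /\
    (forall a x, P a x = \sum_(j | distinctIdx j) q j * g j a (restr j x)).

(* Vertex of the convex polytope C_{N,K}, i.e. an extreme point: a point of
   C_{N,K} that is not a proper convex combination of two distinct points. *)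
Definition vertexC (R : realType) (N K : nat) (P : behavior R N) : Prop :=
  inC K P /\
  forall (P1 P2 : behavior R N) (t : R),
    inC K P1 -> inC K P2 -> 0 < t < 1 ->
    (forall a x, P a x = t * P1 a x + (1 - t) * P2 a x) ->
    forall a x, P1 a x = P2 a x.

Definition flip (N : nat) (x : input N) (j : 'I_N) : input N :=
  [ffun i => if i == j then ~~ x i else x i].

Definition junta (N K : nat) (f : {ffun input N -> bool}) : bool :=
  [exists J : {set 'I_N},
     (#|J| == N - K)%N && [forall j in J, forall x, f x == f (flip x j)]].

Definition detbeh (R : realType) (N : nat) (f : {ffun input N -> bool})
  : behavior R N := fun a x => if a == f x then 1 else 0.

From HB Require Import structures.
From mathcomp Require Import all_boot all_order all_algebra.
From mathcomp Require Import reals.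
From mathcomp Require Import zify ring lra.
Set Implicit Arguments. Unset Strict Implicit. Unset Printing Implicit Defensive.
Import Order.TTheory GRing.Theory Num.Theory.
Local Open Scope ring_scope.

(* A vertex of C_{N,K} cannot be a proper mixture, so it is a single local term
   h(a | x_{j_1} ... x_{j_K}); if h(0 | y) were strictly between 0 and 1 for some y,
   replacing that row by a point mass at 0 or at 1 would split the vertex, so h is
   deterministic and the vertex is delta_{a, f(x)} for a function f of K variables.
   Conversely a deterministic behaviour is already extreme in L_N, and a K-junta is a
   local term for any K-tuple covering its relevant variables.
   For the count, e(k) := #{functions of k variables depending on all of them} and
   sum_{U <= S} e(|U|) = 2^(2^|S|); this identity determines e (Moebius inversion
   over subsets), and binomial inversion solves it. *)

Section BooleanFunctions.
Variable N : nat.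
Implicit Types (f : {ffun input N -> bool}) (x : input N) (i : 'I_N) (S : {set 'I_N}).

Definition relevant f : {set 'I_N} := [set i | [exists x, f x != f (flip x i)]].

Lemma flip_irrelevant f i x : i \notin relevant f -> f (flip x i) = f x.
Proof. by rewrite inE => /existsPn /(_ x); rewrite negbK => /eqP. Qed.

Lemma eq_on_relevant f x x' : {in relevant f, x =1 x'} -> f x = f x'.
Proof.
move Dn : #|[set i | x i != x' i]| => n; elim: n x Dn => [|n IH] x Dn agree.
  suff -> : x = x' by []; apply/ffunP => i; apply/eqP; apply: contraT => neq.
  by move/eqP: Dn; rewrite cards_eq0 => /eqP/setP/(_ i); rewrite !inE neq.
have /set0Pn[i] : [set i | x i != x' i] != set0 by rewrite -card_gt0 Dn.
rewrite inE => neq.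
have irr : i \notin relevant f by apply: contra neq => /agree/eqP.
have flipE j : flip x i j = (if j == i then x' j else x j).
  by rewrite ffunE; case: eqP => // ->; move: neq; case: (x i); case: (x' i).
rewrite -(flip_irrelevant x irr); apply: IH => [|j jrel]; last first.
  by rewrite flipE; case: eqP => // _; apply: agree.
have := cardsD1 i [set i | x i != x' i]; rewrite Dn inE neq add1n => -[->].
by apply: eq_card => j; rewrite !inE flipE; case: (eqVneq j i) => [->|]; rewrite ?eqxx.
Qed.

Section Embedding.
Variable K : nat.
Implicit Types (j : {ffun 'I_K -> 'I_N}) (y : input K).

Definition embed j y : input N := [ffun i => [exists t, (j t == i) && y t]].

Lemma restr_embed j y : injective j -> restr j (embed j y) = y.
Proof.
move=> inj_j; apply/ffunP => t; rewrite !ffunE.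
by apply/existsP/idP => [[s /andP[/eqP/inj_j -> //]]|yt]; exists t; rewrite eqxx.
Qed.

Lemma embed_restr f j x :
  relevant f \subset [set j t | t : 'I_K] -> f (embed j (restr j x)) = f x.
Proof.
move=> /subsetP sub; apply: eq_on_relevant => i /sub /imsetP[t _ ->].
rewrite !ffunE; apply/existsP/idP => [[s /andP[/eqP <-]]|xjt]; first by rewrite ffunE.
by exists t; rewrite eqxx ffunE.
Qed.

Lemma relevant_restr j (F : {ffun input K -> bool}) :
  relevant [ffun x => F (restr j x)] \subset [set j t | t : 'I_K].
Proof.
apply/subsetP => i; rewrite inE => /existsP[x]; apply: contraR => notj.
suff eqr : restr j (flip x i) = restr j x by rewrite !ffunE eqr eqxx.
apply/ffunP => t; rewrite !ffunE; case: eqP => // jt.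
by case/imsetP: notj; exists t.
Qed.

Lemma enum_idx S : #|S| = K ->
  exists2 j : {ffun 'I_K -> 'I_N}, injective j & [set j t | t : 'I_K] = S.
Proof.
move=> cardS; exists [ffun t => enum_val (cast_ord (esym cardS) t)].
  by move=> t1 t2; rewrite !ffunE => /enum_val_inj/cast_ord_inj.
apply/setP => i; apply/imsetP/idP => [[t _ ->]|iS]; first by rewrite ffunE enum_valP.
by exists (cast_ord cardS (enum_rank_in iS i)); rewrite // ffunE cast_ordK enum_rankK_in.
Qed.

End Embedding.

Lemma card_relevant_subset S :
  #|[set f | relevant f \subset S]| = (2 ^ 2 ^ #|S|)%N.
Proof.
have [j inj_j imj] := enum_idx (erefl #|S|).
pose ext (F : {ffun input #|S| -> bool}) : {ffun input N -> bool} := [ffun x => F (restr j x)].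
have inj_ext : injective ext.
  move=> F1 F2 /ffunP eqF; apply/ffunP => y.
  by have := eqF (embed j y); rewrite !ffunE restr_embed.
suff -> : [set f | relevant f \subset S] = [set ext F | F in setT].
  by rewrite card_imset // cardsT card_ffun card_bool card_ffun card_bool card_ord.
apply/setP => f; rewrite inE; apply/idP/imsetP => [rel_f|[F _ ->]].
  exists [ffun y => f (embed j y)] => //.
  by apply/ffunP => x; rewrite !ffunE embed_restr // imj.
by have := relevant_restr j F; rewrite imj.
Qed.

Lemma juntaP K f :
  reflect (exists2 J : {set 'I_N}, #|J| = (N - K)%N & J \subset ~: relevant f) (junta K f).
Proof.
apply: (iffP existsP) => [[J /andP[/eqP cardJ /forall_inP inv]]|[J cardJ sub]].
  exists J => //; apply/subsetP => i /inv /forallP inv_i; rewrite !inE.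
  by apply/existsPn => x; rewrite negbK inv_i.
exists J; rewrite cardJ eqxx; apply/forall_inP => i /(subsetP sub).
by rewrite inE => irr; apply/forallP => x; rewrite flip_irrelevant.
Qed.

Lemma junta_card_relevant K f : (K <= N)%N -> junta K f = (#|relevant f| <= K)%N.
Proof.
move=> leKN; have cardC := cardsC (relevant f); rewrite card_ord in cardC.
apply/juntaP/idP => [[J cardJ /subset_leq_card leJ]|le_rel_K]; first lia.
have : (0 < #|[set J : {set 'I_N} | J \subset ~: relevant f & #|J| == N - K]|)%N.
  by rewrite cards_draws bin_gt0; lia.
by rewrite card_gt0 => /set0Pn[J]; rewrite inE => /andP[sub /eqP]; exists J.
Qed.

End BooleanFunctions.

Lemma mul_bin_bin k t r : (r <= t <= k)%N ->
  ('C(k, t) * 'C(t, r) = 'C(k, r) * 'C(k - r, t - r))%N.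
Proof.
move=> /andP[le_rt le_tk]; have le_rk := leq_trans le_rt le_tk.
have fact_pos : (0 < r`! * (t - r)`! * (k - t)`!)%N by rewrite !muln_gt0 !fact_gt0.
apply/eqP; rewrite -(eqn_pmul2r fact_pos); apply/eqP.
have := bin_fact (leq_sub2r r le_tk); rewrite (_ : k - r - (t - r) = k - t)%N; last by lia.
move: (bin_fact le_tk) (bin_fact le_rt) (bin_fact le_rk) => ekt etr ekr ekrt.
by transitivity k`!; [rewrite -ekt -etr | rewrite -ekr -ekrt]; ring.
Qed.

Section BinomialInversion.
Variable R : comPzRingType.

Lemma sum_bin_bin_sign k r : (r <= k)%N ->
  \sum_(t < k.+1) (-1) ^+ (t - r) * ('C(k, t) * 'C(t, r))%:R = (r == k)%:R :> R.
Proof.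
move=> le_rk.
rewrite -(big_mkord xpredT (fun t => (-1) ^+ (t - r) * ('C(k, t) * 'C(t, r))%:R)).
rewrite (@big_cat_nat _ _ _ r) //=; last exact: leqW.
rewrite big1_seq ?add0r => [|t]; last first.
  by rewrite mem_index_iota => /andP[_ /bin_small->]; rewrite muln0 mulr0.
rewrite -{1}(add0n r) big_addn subSn // big_mkord.
transitivity ('C(k, r)%:R * (-1 + 1) ^+ (k - r) : R).
  rewrite exprD1n mulr_sumr; apply: eq_bigr => s _.
  rewrite mul_bin_bin ?leq_addl //=; last by have := ltn_ord s; lia.
  by rewrite addnK natrM; ring.
rewrite addNr expr0n subn_eq0.
have [<-|ne_rk] := eqVneq r k; first by rewrite binn leqnn mulr1.
by rewrite leqNgt ltn_neqAle ne_rk le_rk mulr0.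
Qed.

Lemma binomial_inversion (c : nat -> R) k :
  \sum_(t < k.+1) 'C(k, t)%:R * \sum_(r < t.+1) (-1) ^+ (t - r) * 'C(t, r)%:R * c r = c k.
Proof.
have widen (t : 'I_k.+1) : \sum_(r < t.+1) (-1) ^+ (t - r) * 'C(t, r)%:R * c r
    = \sum_(r < k.+1) (-1) ^+ (t - r) * 'C(t, r)%:R * c r.
  rewrite (big_ord_widen k.+1 (fun r => (-1) ^+ (t - r) * 'C(t, r)%:R * c r) (ltn_ord t)).
  rewrite big_mkcond; apply: eq_bigr => r _.
  by case: ltnP => // lt_tr; rewrite bin_small // mulr0 mul0r.
under eq_bigr => t _ do rewrite widen mulr_sumr.
have coef (r : 'I_k.+1) : \sum_(t < k.+1) 'C(k, t)%:R * ((-1) ^+ (t - r) * 'C(t, r)%:R * c r)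
    = (r == k :> nat)%:R * c r.
  have le_rk : (r <= k)%N by rewrite -ltnS.
  rewrite -(sum_bin_bin_sign le_rk) mulr_suml.
  by apply: eq_bigr => t _; rewrite natrM; ring.
rewrite exchange_big /=; under eq_bigr => r _ do rewrite coef.
rewrite (bigD1 ord_max) //= eqxx mul1r big1 ?addr0 // => r neq_rk.
by rewrite -[(r == k :> nat)]/(r == ord_max) (negbTE neq_rk) mul0r.
Qed.

End BinomialInversion.

Lemma eq_subset_sums (T : finType) (V : zmodType) (a b : {set T} -> V) :
  (forall S : {set T},
     \sum_(U : {set T} | U \subset S) a U = \sum_(U : {set T} | U \subset S) b U) ->
  a =1 b.
Proof.
move=> eq_sums S; have [n] := ubnP #|S|; elim: n S => // n IH S lt_S_n.
have := eq_sums S; rewrite (bigD1 S) // [in RHS](bigD1 S) //= (eq_bigr b).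
  by move/addIr.
move=> U /andP[sub_US neq_US].
apply: IH; have /proper_card : U \proper S by rewrite properEneq neq_US.
by move: lt_S_n; lia.
Qed.

Lemma sum_set_by_card (T : finType) (V : nmodType) (A : pred {set T}) m (F : nat -> V) :
  (forall U, A U -> #|U| <= m)%N ->
  \sum_(U | A U) F #|U| = \sum_(t < m.+1) F t *+ #|[set U : {set T} | A U & #|U| == t]|.
Proof.
move=> le_m; rewrite (partition_big (fun U : {set T} => inord #|U| : 'I_m.+1) xpredT) //.
apply: eq_bigr => t _; rewrite -sumr_const; apply: eq_big => [U|U /andP[AU /eqP <-]].
  rewrite !inE; case AU: (A U) => //=.
  by rewrite -val_eqE /= inordK // ltnS le_m.
by rewrite inordK // ltnS le_m.
Qed.

Definition num_essential k : int :=
  \sum_(r < k.+1) (-1) ^+ (k - r) * ('C(k, r))%:Z * (2 ^ (2 ^ r))%:Z.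

Section CountingJuntas.
Variable N : nat.
Implicit Types (f : {ffun input N -> bool}) (S : {set 'I_N}).

Lemma card_relevant_partition (P : pred {set 'I_N}) :
  #|[set f | P (relevant f)]| = (\sum_(S | P S) #|[set f | relevant f == S]|)%N.
Proof.
rewrite -sum1_card (partition_big (@relevant N) P) => [|f]; last by rewrite inE.
apply: eq_bigr => S PS; rewrite -sum1_card; apply: eq_bigl => f.
by rewrite !inE; case: eqP => [->|]; rewrite ?PS ?andbF.
Qed.

Lemma sum_num_essential_subset S :
  \sum_(U : {set 'I_N} | U \subset S) num_essential #|U| = (2 ^ 2 ^ #|S|)%:Z.
Proof.
rewrite (sum_set_by_card (m := #|S|)) => [|U]; last exact: subset_leq_card.
rewrite -[RHS](binomial_inversion (fun r => (2 ^ 2 ^ r)%:Z)); apply: eq_bigr => t _.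
rewrite cards_draws mulr_natl; congr (_ *+ _).
by apply: eq_bigr => r _; rewrite natz.
Qed.

Lemma card_relevant_eq S : #|[set f | relevant f == S]|%:Z = num_essential #|S|.
Proof.
apply: (eq_subset_sums (a := fun S => #|[set f | relevant f == S]|%:Z)
                       (b := fun S => num_essential #|S|)) => {}S.
rewrite sum_num_essential_subset -card_relevant_subset.
by rewrite (card_relevant_partition (fun U => U \subset S)) (big_morph Posz PoszD (erefl 0%:Z)).
Qed.

Lemma card_junta K : (K <= N)%N ->
  #|[set f : {ffun input N -> bool} | junta K f]|%:Z =
  \sum_(k < K.+1) 'C(N, k)%:Z * num_essential k.
Proof.
move=> le_KN.
have -> : [set f : {ffun input N -> bool} | junta K f] = [set f | #|relevant f| <= K]%N.
  by apply/setP => f; rewrite !inE junta_card_relevant.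
rewrite (card_relevant_partition (fun U => #|U| <= K)%N) (big_morph Posz PoszD (erefl 0%:Z)).
under eq_bigr => S _ do rewrite card_relevant_eq.
rewrite (sum_set_by_card (m := K)) //; apply: eq_bigr => k _.
rewrite -mulr_natl natz; congr (Posz _ * _).
have := card_draws 'I_N k; rewrite card_ord => <-; apply: eq_card => S.
by rewrite !inE andb_idl // => /eqP ->; rewrite -ltnS.
Qed.

End CountingJuntas.

Section Deterministic.
Variables (R : realType) (N : nat).
Implicit Types (f : {ffun input N -> bool}) (P : behavior R N).

Lemma inL_detbeh f : inL (detbeh R f).
Proof. by split=> [a x|x]; rewrite /detbeh; [case: eqP | case: (f x)]; rewrite ?add0r ?addr0. Qed.

Lemma detbeh_inj : injective (@detbeh R N).
Proof.
move=> f1 f2 eq_f; apply/ffunP => x.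
have /eqP := congr1 (fun P : behavior R N => P (f1 x) x) eq_f.
by rewrite /detbeh eqxx; case: (eqVneq (f1 x) (f2 x)) => // _; rewrite oner_eq0.
Qed.

Lemma inL_le1 P a x : inL P -> P a x <= 1.
Proof. by case=> ge0 sum1; have := sum1 x; have := ge0 (~~ a) x; case: a => /=; lra. Qed.

Lemma detbeh_extreme f P1 P2 t : inL P1 -> inL P2 -> 0 < t < 1 ->
  detbeh R f =2 (fun a x => t * P1 a x + (1 - t) * P2 a x) -> P1 =2 P2.
Proof.
move=> P1L P2L /andP[t_gt0 t_lt1] defP a x.
have := inL_le1 a x P1L; have := inL_le1 a x P2L; have := P1L.1 a x; have := P2L.1 a x.
by have := defP a x; rewrite /detbeh; case: eqP => _; nra.
Qed.

End Deterministic.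

Section Polytope.
Variables (R : realType) (N K : nat).
Implicit Types (P : behavior R N) (f : {ffun input N -> bool}).
Implicit Types (h : behavior R K) (j : {ffun 'I_K -> 'I_N}).
Implicit Types (q : {ffun 'I_K -> 'I_N} -> R) (g : {ffun 'I_K -> 'I_N} -> behavior R K).

Definition restr_beh j h : behavior R N := fun a x => h a (restr j x).

Definition mixture q g : behavior R N :=
  fun a x => \sum_(j | distinctIdx j) q j * g j a (restr j x).

Definition is_mixture q g : Prop :=
  (forall j, distinctIdx j -> 0 <= q j /\ inL (g j)) /\ \sum_(j | distinctIdx j) q j = 1.

Lemma eq_inC P P' : P =2 P' -> inC K P -> inC K P'.
Proof.
move=> eqP' [[ge0 sum1] [q [g [qg [qsum1 defP]]]]]; split.
  by split=> [a x|x]; rewrite -?eqP'.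
by exists q, g; do 2!split => //; move=> a x; rewrite -eqP'.
Qed.

Lemma inC_mixture q g : is_mixture q g -> inC K (mixture q g).
Proof.
move=> [qg qsum1]; split; last by exists q, g.
split=> [a x|x].
  by apply: sumr_ge0 => j /qg[q_ge0 [g_ge0 _]]; apply: mulr_ge0.
rewrite -big_split -qsum1; apply: eq_bigr => j /qg[_ [_ gsum1]].
by rewrite /= -mulrDr gsum1 mulr1.
Qed.

Lemma inC_restr_beh j h : distinctIdx j -> inL h -> inC K (restr_beh j h).
Proof.
move=> dj hL; pose q i := (i == j)%:R : R.
have sum_delta (F : {ffun 'I_K -> 'I_N} -> R) : \sum_(i | distinctIdx i) q i * F i = F j.
  rewrite (bigD1 j) //= big1 => [|i /andP[_ /negbTE ne_ij]]; last by rewrite /q ne_ij mul0r.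
  by rewrite /q eqxx mul1r addr0.
apply: (@eq_inC (mixture q (fun=> h))) => [a x|]; first exact: sum_delta.
apply: inC_mixture; split.
  by move=> i _; split; rewrite ?ler0n.
under eq_bigr => i _ do rewrite -[q i]mulr1.
exact: (sum_delta (fun=> 1)).
Qed.

Lemma mixture_split q g j0 : is_mixture q g -> distinctIdx j0 -> q j0 < 1 ->
  exists2 P2, inC K P2 &
    mixture q g =2 (fun a x => q j0 * restr_beh j0 (g j0) a x + (1 - q j0) * P2 a x).
Proof.
move=> [qg qsum1] dj0 lt_q1; have rest_gt0 : 0 < 1 - q j0 by rewrite subr_gt0.
have rest : \sum_(j | distinctIdx j) (j != j0)%:R * q j = 1 - q j0.
  rewrite -[in RHS]qsum1 (bigD1 j0) //= eqxx mul0r add0r [in RHS](bigD1 j0) //=.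
  by rewrite [q j0 + _]addrC addrK; apply: eq_bigr => j /andP[_ ->]; rewrite mul1r.
pose q2 j := (j != j0)%:R * q j / (1 - q j0); exists (mixture q2 g).
  apply: inC_mixture; split => [j dj|]; last by rewrite -mulr_suml rest divff ?gt_eqF.
  have [q_ge0 gL] := qg j dj; split => //.
  by rewrite /q2 divr_ge0 ?mulr_ge0 // ltW.
move=> a x; rewrite /mixture /restr_beh (bigD1 j0) //= mulr_sumr; congr (_ + _).
rewrite [in RHS](bigD1 j0) //= /q2 eqxx !mul0r mulr0 add0r.
apply: eq_bigr => j /andP[_ ->]; rewrite /= mul1r; field.
by rewrite gt_eqF.
Qed.

Lemma mixture_concentrated q g j0 : is_mixture q g -> distinctIdx j0 -> 1 <= q j0 ->
  mixture q g =2 restr_beh j0 (g j0).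
Proof.
move=> [qg qsum1] dj0 ge_q1.
have rest_ge0 j : distinctIdx j && (j != j0) -> 0 <= q j by case/andP=> /qg[].
have rest_sum_ge0 : 0 <= \sum_(j | distinctIdx j && (j != j0)) q j by apply: sumr_ge0.
move: qsum1; rewrite (bigD1 j0) //= => qsum1.
have rest0 : \sum_(j | distinctIdx j && (j != j0)) q j = 0 by lra.
have q1 : q j0 = 1 by lra.
move=> a x; rewrite /mixture (bigD1 j0) //= big1 ?addr0 => [|j dj]; first by rewrite q1 mul1r.
by rewrite (psumr_eq0P rest_ge0 rest0 dj) mul0r.
Qed.

Lemma vertexC_convex P A B t : vertexC K P -> inC K A -> inC K B -> 0 < t < 1 ->
  P =2 (fun a x => t * A a x + (1 - t) * B a x) -> P =2 A.
Proof.
move=> [_ extreme] AC BC t01 defP a x.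
by rewrite defP -(extreme A B t AC BC t01 defP a x); ring.
Qed.

Lemma vertexC_restr_beh P : vertexC K P ->
  exists j h, [/\ distinctIdx j, inL h & P =2 restr_beh j h].
Proof.
move=> vP; have [[_ [q [g [qg [qsum1 defP]]]]] _] := vP.
have mix : is_mixture q g by [].
have {}defP : P =2 mixture q g := defP.
have /existsP[j0 /andP[dj0 q_gt0]] : [exists j0, distinctIdx j0 && (0 < q j0)].
  apply: contraLR (oner_neq0 R) => /existsPn q_le0; rewrite negbK -qsum1 big1 // => j dj.
  by have := q_le0 j; rewrite dj lt_def (qg j dj).1 andbT negbK => /eqP.
have gL := (qg j0 dj0).2; exists j0, (g j0); split => //.
have [lt_q1|ge_q1] := ltP (q j0) 1; last first.
  by move=> a x; rewrite defP (mixture_concentrated mix dj0).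
have [P2 P2C defP2] := mixture_split mix dj0 lt_q1.
apply: (vertexC_convex vP (inC_restr_beh dj0 gL) P2C (t := q j0)); first by rewrite q_gt0.
by move=> a x; rewrite defP defP2.
Qed.

Lemma vertexC_restr_beh_det P j h : distinctIdx j -> inL h -> vertexC K P ->
  P =2 restr_beh j h -> exists F : {ffun input K -> bool}, h =2 detbeh R F.
Proof.
move=> dj [h_ge0 h_sum1] vP defP.
have h01 y0 : h false y0 = 0 \/ h false y0 = 1.
  set t := h false y0; have [|t_ne0] := eqVneq t 0; [by left | right].
  have [//|t_ne1] := eqVneq t 1.
  have t01 : 0 < t < 1.
    rewrite !lt_def t_ne0 eq_sym t_ne1 h_ge0 /=.
    by have := h_sum1 y0; have := h_ge0 true y0; rewrite -/t; lra.
  pose pin (b : bool) : behavior R K := fun a y => if y == y0 then (a == b)%:R else h a y.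
  have pinL b : inL (pin b).
    split=> [a y|y]; rewrite /pin; case: eqP => _;
      [exact: ler0n | exact: h_ge0 | | exact: h_sum1].
    by case: b; rewrite /= ?add0r ?addr0.
  have split_h : P =2 (fun a x =>
      t * restr_beh j (pin false) a x + (1 - t) * restr_beh j (pin true) a x).
    move=> a x; rewrite defP /restr_beh /pin; case: eqP => [->|_]; last by ring.
    by have := h_sum1 y0; case: a => /=; rewrite -/t; lra.
  have := vertexC_convex vP (inC_restr_beh dj (pinL false)) (inC_restr_beh dj (pinL true))
    t01 split_h false (embed j y0).
  by rewrite defP /restr_beh /pin restr_embed ?eqxx //; apply/injectiveP.
exists [ffun y => h true y == 1] => a y; rewrite /detbeh ffunE.
have h_true : h true y = 1 - h false y by have := h_sum1 y; lra.
case: (h01 y) => h_false; case: a; rewrite ?h_true h_false ?subr0 ?subrr ?eqxx //=.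
  by rewrite [_ == 1]eq_sym oner_eq0.
by rewrite [_ == 1]eq_sym oner_eq0.
Qed.

Lemma inC_detbeh f : (K <= N)%N -> junta K f -> inC K (detbeh R f).
Proof.
move=> le_KN /juntaP[J cardJ /subsetP sub].
have [j inj_j imj] :
    exists2 j : {ffun 'I_K -> 'I_N}, injective j & [set j t | t : 'I_K] = ~: J.
  by apply: enum_idx; rewrite cardsCs setCK card_ord cardJ subKn.
apply: (@eq_inC (restr_beh j (detbeh R [ffun y => f (embed j y)]))) => [a x|].
  rewrite /restr_beh /detbeh ffunE embed_restr // imj.
  by apply/subsetP => i rel_i; rewrite inE; apply: contraL rel_i => /sub; rewrite inE.
by apply: inC_restr_beh; [apply/injectiveP | apply: inL_detbeh].
Qed.

Lemma vertexC_junta P :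
  vertexC K P -> exists f : {ffun input N -> bool}, junta K f /\ P =2 detbeh R f.
Proof.
move=> vP; have [j [h [dj hL defP]]] := vertexC_restr_beh vP.
have [F defh] := vertexC_restr_beh_det dj hL vP defP.
have le_KN : (K <= N)%N.
  by rewrite -[K]card_ord -[N]card_ord; apply: (@leq_card _ _ j); apply/injectiveP.
exists [ffun x => F (restr j x)]; split => [|a x].
  rewrite junta_card_relevant // (leq_trans (subset_leq_card (relevant_restr j F))) //.
  by rewrite (leq_trans (leq_imset_card _ _)) ?card_ord.
by rewrite defP /restr_beh defh /detbeh ffunE.
Qed.

End Polytope.

Unset Implicit Arguments.

Theorem mainTheorem1 (R : realType) (N K : nat) :
  (1 <= N)%N -> (1 <= K <= N)%N ->
  (forall P : behavior R N,
     vertexC K P <->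
     exists f : {ffun input N -> bool},
       junta K f /\ forall a x, P a x = @detbeh R N f a x)
  /\ injective (fun f : {ffun input N -> bool} => @detbeh R N f)
  /\ (#|[set f : {ffun input N -> bool} | junta K f]|%:Z =
      \sum_(k < K.+1)
         ('C(N, k))%:Z *
         \sum_(r < k.+1) ((-1) ^+ (k - r) * ('C(k, r))%:Z * (2 ^ (2 ^ r))%:Z)).
Proof.
move=> _ /andP[_ le_KN]; split; [|split].
- move=> P; split; first exact: vertexC_junta.
  case=> f [junta_f defP]; split.
    by apply: (eq_inC _ (inC_detbeh R le_KN junta_f)) => a x; rewrite defP.
  move=> P1 P2 t [P1L _] [P2L _] t01 defP12.
  by apply: (detbeh_extreme (f := f) P1L P2L t01) => a x; rewrite -defP defP12.
- exact: detbeh_inj.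
- exact: card_junta.
Qed.
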